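(* Define polynomials $q_k(x)\in\mathbb{Z}[x]$ for integers $k\ge 0$ by $$q_0(x)=x^2-5x+3,\qquad q_1(x)=(x^3-8x^2+17x-5)(x-1),$$ $$q_k(x)=(x^2-4x+2)\,q_{k-1}(x)-q_{k-2}(x)\quad (k\ge 2).$$ Then for every integer $k\ge 0$, the polynomial $q_k(x)$ is divisible by $(x-1)$ if and only if $k\equiv 1 \pmod 3$.
   Context: The polynomials $q_k$ are, up to the factor $(x-2)^2$, the characteristic polynomials of $A_k^tA_k$, where $A_k$ is the even-to-odd incidence matrix of a certain bipartite tree $\Gamma_k$; this is background only and is not needed for the claim. *)

From mathcomp Require Import all_boot all_order all_algebra.
Set Implicit Arguments. Unset Strict Implicit. Unset Printing Implicit Defensive.
Import GRing.Theory.
Local Open Scope ring_scope.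

Definition q0 : {poly int} := 'X^2 - 5%:P * 'X + 3%:P.
Definition q1 : {poly int} :=
  ('X^3 - 8%:P * 'X^2 + 17%:P * 'X - 5%:P) * ('X - 1).

(* pair (q_k, q_{k+1}) *)
Fixpoint qpair (k : nat) : {poly int} * {poly int} :=
  match k with
  | 0%N => (q0, q1)
  | k'.+1 => let: (a, b) := qpair k' in
             (b, ('X^2 - 4%:P * 'X + 2%:P) * b - a)
  end.

Definition q (k : nat) : {poly int} := (qpair k).1.

(* Since x^2 - 4x + 2 takes the value -1 at x = 1, the values a_k = q_k(1)
   satisfy a_{k+2} = - a_{k+1} - a_k, so they are 3-periodic; starting from
   a_0 = -1 and a_1 = 0 they run -1, 0, 1, -1, 0, 1, ...  By the factor
   theorem, x - 1 divides q_k exactly when a_k = 0, i.e. when k = 1 mod 3. *)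

From mathcomp Require Import all_boot all_order all_algebra.
Set Implicit Arguments. Unset Strict Implicit. Unset Printing Implicit Defensive.
Import GRing.Theory.
Local Open Scope ring_scope.

Lemma exists_mulXsub1P (R : comNzRingType) (p : {poly R}) :
  (exists r : {poly R}, p = ('X - 1) * r) <-> p.[1] = 0.
Proof.
split=> [[r ->] | /eqP p1_0]; first by rewrite hornerM hornerXsubC subrr mul0r.
have /factor_theorem [r ->] : root p 1 by [].
by exists r; rewrite polyC1 mulrC.
Qed.

Lemma periodic3_rec (V : zmodType) (a : nat -> V) :
  (forall k, a k.+2 = - a k.+1 - a k) -> forall k, a k.+3 = a k.
Proof. by move=> aSS k; rewrite !aSS opprB opprK addrK. Qed.

Lemma periodic_modn (T : Type) (a : nat -> T) (d : nat) :
  (forall k, a (k + d)%N = a k) -> forall k, a k = a (k %% d)%N.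
Proof.
move=> a_per k; rewrite {1}(divn_eq k d) addnC.
elim: (k %/ d)%N => [|m IHm]; first by rewrite mul0n addn0.
by rewrite mulSn [(d + _)%N]addnC addnA a_per.
Qed.

Lemma qSS k : q k.+2 = ('X^2 - 4%:P * 'X + 2%:P) * q k.+1 - q k.
Proof. by rewrite /q /=; case: (qpair k). Qed.

Lemma q_horner1SS k : (q k.+2).[1] = - (q k.+1).[1] - (q k).[1].
Proof.
have coef_at1 : ('X^2 - 4%:P * 'X + 2%:P : {poly int}).[1] = -1 by rewrite !hornerE.
by rewrite qSS hornerD hornerN hornerM coef_at1 mulN1r.
Qed.

Lemma q_horner1_mod3 k : (q k).[1] = (q (k %% 3)).[1].
Proof.
have per3 j : (q (j + 3)).[1] = (q j).[1].
  by rewrite addn3 (periodic3_rec (a := fun j => (q j).[1]) q_horner1SS).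
exact: (periodic_modn (a := fun j => (q j).[1]) per3).
Qed.

Lemma q_horner1_0 : (q 0).[1] = -1.
Proof. by rewrite /q /= /q0 !hornerE. Qed.

Lemma q_horner1_1 : (q 1).[1] = 0.
Proof. by rewrite /q /= /q1 hornerM !hornerE. Qed.

Lemma q_horner1_2 : (q 2).[1] = 1.
Proof. by rewrite q_horner1SS q_horner1_1 q_horner1_0 sub0r opprK. Qed.

Theorem mainTheorem1 (k : nat) :
  (exists r : {poly int}, q k = ('X - 1) * r) <-> (k %% 3 = 1)%N.
Proof.
apply: iff_trans (exists_mulXsub1P (q k)) _; rewrite q_horner1_mod3.
have : (k %% 3 < 3)%N by rewrite ltn_mod.
case: (k %% 3)%N => [|[|[|//]]] _.
- by rewrite q_horner1_0; split=> [/eqP|//]; rewrite oppr_eq0 oner_eq0.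
- by rewrite q_horner1_1.
- by rewrite q_horner1_2; split=> [/eqP|//]; rewrite oner_eq0.
Qed.
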